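(* If $G$ is an extended $\mathcal C$-pair, then $\chi(G)\le\lceil\frac54\omega(G)\rceil$.
   Context: $\mathcal C$ is the class of $(P_4,C_4,2P_3)$-free graphs ($2P_3$: disjoint union of two copies of $P_3$). A graph is a $\mathcal C$-pair (with respect to a partition $(X,A)$ of its vertex set) if it is $P_6$-free and chordal, $A$ is a clique, $G[X]\in\mathcal C$, every vertex of $X$ has a neighbor in $A$, and any two non-adjacent vertices of $X$ have no common neighbor in $A$. A graph $G$ is an extended $\mathcal C$-pair if $V(G)$ can be partitioned into three sets $Q,X,A$ such that $G[X\cup A]$ is a $\mathcal C$-pair with respect to $(X,A)$, $Q$ is a clique, $Q$ is complete to $X$ (all edges present), and there are no edges between $Q$ and $A$. *)

(* Simple graphs: a symmetric irreflexive relation e on a finType T. *)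
From mathcomp Require Import all_boot.
Set Implicit Arguments. Unset Strict Implicit. Unset Printing Implicit Defensive.

Definition path_rel (k : nat) : rel 'I_k :=
  fun i j => (i.+1 == j :> nat) || (j.+1 == i :> nat).

Definition cycle_rel (k : nat) : rel 'I_k :=
  fun i j => path_rel i j
    || ((i == 0 :> nat) && (j == k.-1 :> nat))
    || ((j == 0 :> nat) && (i == k.-1 :> nat)).

Definition P4 : rel 'I_4 := @path_rel 4.
Definition C4 : rel 'I_4 := @cycle_rel 4.
Definition P6 : rel 'I_6 := @path_rel 6.
(* 2P3 : 0-1-2 and 3-4-5, disjoint *)
Definition twoP3 : rel 'I_6 :=
  fun i j => path_rel i j && ~~ ((minn i j == 2) && (maxn i j == 3)).

Section Graphs.
Variables (T : finType) (e : rel T).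

Definition has_induced_on (S : {set T}) (k : nat) (h : rel 'I_k) : Prop :=
  exists f : 'I_k -> T, [/\ injective f, (forall i, f i \in S) &
    (forall i j, i != j -> e (f i) (f j) = h i j)].

Definition induced_free_on (S : {set T}) (k : nat) (h : rel 'I_k) : Prop :=
  ~ has_induced_on S h.

Definition chordal_on (S : {set T}) : Prop :=
  forall k, 3 < k -> induced_free_on S (@cycle_rel k).

Definition in_classC (S : {set T}) : Prop :=
  [/\ induced_free_on S P4, induced_free_on S C4 & induced_free_on S twoP3].

Definition is_clique (S : {set T}) : bool :=
  [forall x in S, forall y in S, (x != y) ==> e x y].

Definition C_pair (X A : {set T}) : Prop :=
  [/\ [disjoint X & A],
      induced_free_on (X :|: A) P6 /\ chordal_on (X :|: A),
      is_clique A,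
      in_classC X &
      (forall x, x \in X -> exists2 a, a \in A & e x a) /\
      (forall x y, x \in X -> y \in X -> x != y -> ~~ e x y ->
         forall a, a \in A -> ~~ (e x a && e y a))].

Definition extended_C_pair : Prop :=
  exists Q X A : {set T},
    [/\ [&& [disjoint Q & X], [disjoint Q & A] & [disjoint X & A]],
        Q :|: X :|: A = [set: T],
        C_pair X A,
        is_clique Q &
        (forall q x, q \in Q -> x \in X -> e q x) /\
        (forall q a, q \in Q -> a \in A -> ~~ e q a)].

Definition omega : nat := \max_(S : {set T} | is_clique S) #|S|.

Definition colorable (k : nat) : bool :=
  [exists c : {ffun T -> 'I_k}, [forall x, forall y, e x y ==> (c x != c y)]].

Lemma colorable_card : irreflexive e -> exists k, colorable k.
Proof.
move=> irr; exists #|T|; apply/existsP; exists [ffun x => enum_rank x].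
apply/forallP=> x; apply/forallP=> y; apply/implyP=> exy; rewrite !ffunE.
apply/negP=> /eqP/enum_rank_inj exy'; by rewrite exy' irr in exy.
Qed.

Definition chi (irr : irreflexive e) : nat := ex_minn (colorable_card irr).

End Graphs.

From mathcomp Require Import all_boot zify.
Set Implicit Arguments. Unset Strict Implicit. Unset Printing Implicit Defensive.

(* Rank the vertices of [X] by decreasing closed [X]-neighbourhood, then by
   decreasing [A]-neighbourhood.  Since [X] is (P4, C4)-free and [X :|: A] is
   chordal, every earlier [X]-neighbour [z] of [x] dominates it: [N_X[x] <= N_X[z]]
   and [N_A(x) <= N_A(z)].  Hence [x], its earlier neighbours and [N_A(x)] form a
   clique, and so do [Q], [x] and its earlier neighbours.  Let [t] be the largest
   size of [x] plus its earlier neighbours and [c = ceil(omega/4)].  The sets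
   [N_A(x)] form a laminar family, and a hitting-set argument on it yields
   [D <= A] with [|D| <= omega - t], [|A \ D| <= t], such that each [x] has at most
   [t + c] earlier neighbours and [A]-neighbours outside [D] counting itself.  A
   greedy colouring then colours [X] and [A \ D] with [t + c] colours, and [D] and
   [Q] (no edges between them) share [omega - t] further colours:
   [omega + c = ceil(5 omega / 4)] in total. *)

Lemma subset_card_between (T : finType) (D A : {set T}) k :
  D \subset A -> #|D| <= k <= #|A| ->
  exists B : {set T}, [/\ D \subset B, B \subset A & #|B| = k].
Proof.
have [n] := ubnP (k - #|D|); elim: n D => // n IH D ltkD sDA /andP[Dk kA].
have [ltDk|] := ltnP #|D| k; last by exists D; split=> //; apply/eqP; rewrite eqn_leq Dk.
have /properP[_ [a aA aD]] : D \proper A by rewrite properEcard sDA (leq_trans ltDk kA).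
have [|||B [sDB sBA cardB]] := IH (a |: D).
- by rewrite cardsU1 aD; lia.
- by rewrite subUset sub1set aA.
- by rewrite cardsU1 aD add1n ltDk kA.
by exists B; split=> //; apply: subset_trans sDB; apply: subsetUr.
Qed.

Lemma exists_fresh_below (s : seq nat) n : size s < n -> exists2 i, i < n & i \notin s.
Proof.
move=> lt_s_n; have [/allP used|/allPn[i]] := boolP (all (mem s) (iota 0 n)).
  have := uniq_leq_size (iota_uniq 0 n) used; rewrite size_iota => le_n_s.
  by have := leq_ltn_trans le_n_s lt_s_n; rewrite ltnn.
by rewrite mem_iota => /= lt_i_n s_i; exists i.
Qed.

Lemma cardsU_disjoint (T : finType) (A B : {set T}) :
  [disjoint A & B] -> #|A :|: B| = #|A| + #|B|.
Proof. by move=> dAB; apply/eqP; rewrite (leq_card_setU A B).2. Qed.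

Lemma packing_bound_arith w t c m S :
  w <= 4 * c -> S + m * c <= w -> S <= m * (w - t - c) -> S <= w - t.
Proof.
move=> w4c S1 S2; have [|le4m] := ltnP m 4.
  by case: m S1 S2 => [|[|[|[|//]]]] /=; lia.
have : 4 * c <= m * c by rewrite leq_mul2r le4m orbT.
lia.
Qed.

Definition pairwise_disjoint (I T : finType) (F : I -> {set T}) (P : {set I}) :=
  {in P &, forall i j, i != j -> [disjoint F i & F j]}.

Lemma card_bigcup_disjoint (I T : finType) (F : I -> {set T}) (P : {set I}) :
  pairwise_disjoint F P -> #|\bigcup_(i in P) F i| = \sum_(i in P) #|F i|.
Proof.
have [n leP] := ubnP #|P|; elim: n P leP => // n IH P leP dP.
have [->|[i iP]] := set_0Vmem P; first by rewrite !big_set0 cards0.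
have dPi : pairwise_disjoint F (P :\ i).
  by move=> j k /setD1P[_ jP] /setD1P[_ kP]; apply: dP.
rewrite (big_setD1 i iP) (big_setD1 i iP) /= cardsU -IH //; last first.
  by rewrite (cardsD1 i P) iP in leP.
suff -> : F i :&: \bigcup_(j in P :\ i) F j = set0 by rewrite cards0 subn0.
apply/setP => a; rewrite !inE; apply/andP => -[aFi /bigcupP[j /setD1P[ji jP] aFj]].
have ij : i != j by rewrite eq_sym.
have /disjoint_setI0/setP/(_ a) := dP i j iP jP ij.
by rewrite !inE aFi aFj.
Qed.

Lemma packing_demand_le (I T : finType) (F : I -> {set T}) (g : I -> nat) (B : nat) :
  (forall P : {set I}, {in P, forall i, 0 < g i} ->
     pairwise_disjoint F P -> \sum_(i in P) g i <= B) ->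
  forall i, g i <= B.
Proof.
move=> pack i; have [->//|gi] := posnP (g i).
have := pack [set i]; rewrite big_set1; apply; first by move=> j /set1P->.
by move=> j k /set1P-> /set1P->; rewrite eqxx.
Qed.

Section HittingStep.
Variables (I T : finType) (F : I -> {set T}) (g : I -> nat) (B : nat).
Hypothesis laminarF : forall i j, 0 < g i -> 0 < g j ->
  [|| F i \subset F j, F j \subset F i | [disjoint F i & F j]].
Hypothesis g_le_card : forall i, g i <= #|F i|.
Hypothesis packingF : forall P : {set I}, {in P, forall i, 0 < g i} ->
  pairwise_disjoint F P -> \sum_(i in P) g i <= B.+1.

Variable a : T.

Let F' i := F i :\ a.
Let g' i := g i - (a \in F i).

Lemma hitting_step_laminar i j : 0 < g' i -> 0 < g' j ->
  [|| F' i \subset F' j, F' j \subset F' i | [disjoint F' i & F' j]].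
Proof.
move=> gi gj; rewrite /F'.
have /or3P[H|H|H] := laminarF (leq_trans gi (leq_subr _ _)) (leq_trans gj (leq_subr _ _)).
- by rewrite (setSD _ H).
- by rewrite (setSD _ H) orbT.
- by rewrite (disjointW (subD1set _ _) (subD1set _ _) H) !orbT.
Qed.

Lemma hitting_step_le_card i : g' i <= #|F' i|.
Proof. by have := g_le_card i; rewrite /g' /F' (cardsD1 a (F i)); lia. Qed.

Lemma hitting_step_lift (D : {set T}) : (forall i, g' i <= #|D :&: F' i|) ->
  forall i, g i <= #|(a |: D) :&: F i|.
Proof.
move=> hitD i; have := hitD i; rewrite /g' /F'.
case: (boolP (a \in F i)) => aFi /= H; last first.
  rewrite subn0 in H; apply: (leq_trans H); apply: subset_leq_card.
  by apply: setISS; [exact: subsetUr | exact: subD1set].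
have sub : a |: D :&: (F i :\ a) \subset (a |: D) :&: F i.
  apply/subsetP => y; rewrite !inE => /orP[/eqP->|/and3P[-> _ ->]]; last by rewrite orbT.
  by rewrite eqxx.
apply: leq_trans (subset_leq_card sub); rewrite cardsU1 !inE eqxx andbF /=; lia.
Qed.

Lemma hitting_step_pairwise_disjoint (P : {set I}) : {in P, forall i, 0 < g' i} ->
  pairwise_disjoint F' P -> pairwise_disjoint F P.
Proof.
move=> g'P dP' i j iP jP ij; have dij := dP' i j iP jP ij.
have gP k : k \in P -> 0 < g k by move=> /g'P; rewrite /g'; lia.
have nonempty k : k \in P -> F' k != set0.
  by move=> kP; rewrite -card_gt0 (leq_trans (g'P k kP)) ?hitting_step_le_card.
have empty_of_sub (A C : {set T}) : A \subset C -> [disjoint A & C] -> A = set0.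
  by move=> sAC; rewrite -setI_eq0 (setIidPl sAC) => /eqP.
have /or3P[H|H|//] := laminarF (gP i iP) (gP j jP).
- by have := nonempty i iP; rewrite /F' (empty_of_sub _ _ (setSD _ H) dij) eqxx.
- rewrite disjoint_sym in dij.
  by have := nonempty j jP; rewrite /F' (empty_of_sub _ _ (setSD _ H) dij) eqxx.
Qed.

(* Removing a point [a] of a smallest demanding set [F i0] lowers the packing bound by one. *)
Variable i0 : I.
Hypothesis g_i0 : 0 < g i0.
Hypothesis min_i0 : forall j, 0 < g j -> #|F i0| <= #|F j|.
Hypothesis a_Fi0 : a \in F i0.

Lemma hitting_step_packing (P : {set I}) : {in P, forall i, 0 < g' i} ->
  pairwise_disjoint F' P -> \sum_(i in P) g' i <= B.
Proof.
move=> g'P dP'; have dP := hitting_step_pairwise_disjoint g'P dP'.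
have gP i : i \in P -> 0 < g i by move=> /g'P; rewrite /g'; lia.
have a_only i j : i \in P -> j \in P -> i != j -> a \in F i -> a \notin F j.
  move=> iP jP ij aFi; apply/negP => aFj.
  by have /disjoint_setI0/setP/(_ a) := dP i j iP jP ij; rewrite !inE aFi aFj.
case: (pickP [pred i in P | a \in F i]) => [i /andP[iP aFi] | noa].
- have := packingF gP dP; rewrite (bigD1 i iP) [X in X <= B](bigD1 i iP) /=.
  rewrite [X in _ + X <= _ -> _](eq_bigr g') => [|j /andP[jP ji]]; last first.
    by rewrite eq_sym in ji; rewrite /g' (negbTE (a_only i j iP jP ji aFi)) subn0.
  by rewrite /g' aFi; have := gP i iP; lia.
- have no_a j : j \in P -> a \notin F j by move=> jP; have := noa j; rewrite /= jP => /negbT.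
  have i0P : i0 \notin P by apply: contraL a_Fi0; exact: no_a.
  have d0 j : j \in P -> [disjoint F i0 & F j].
    move=> jP; have /or3P[H|H|//] := laminarF g_i0 (gP j jP).
    + by have := no_a j jP; rewrite (subsetP H a a_Fi0).
    + have /eqP Fj := eqEcard (F j) (F i0); rewrite H min_i0 ?gP // in Fj.
      by have := no_a j jP; rewrite Fj a_Fi0.
  have dP0 : pairwise_disjoint F (i0 |: P).
    move=> j k /setU1P[->|jP] /setU1P[->|kP] jk.
    + by rewrite eqxx in jk.
    + exact: d0.
    + by rewrite disjoint_sym; apply: d0.
    + exact: dP.
  have gP0 : {in i0 |: P, forall j, 0 < g j} by move=> j /setU1P[->|/gP].
  have -> : \sum_(j in P) g' j = \sum_(j in P) g j.
    by apply: eq_bigr => j jP; rewrite /g' (negbTE (no_a j jP)) subn0.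
  by have := packingF gP0 dP0; rewrite big_setU1 //=; lia.
Qed.

End HittingStep.

Lemma laminar_hitting_set (I T : finType) (F : I -> {set T}) (g : I -> nat) (B : nat) :
  (forall i j, 0 < g i -> 0 < g j ->
     [|| F i \subset F j, F j \subset F i | [disjoint F i & F j]]) ->
  (forall i, g i <= #|F i|) ->
  (forall P : {set I}, {in P, forall i, 0 < g i} ->
     pairwise_disjoint F P -> \sum_(i in P) g i <= B) ->
  exists2 D : {set T}, #|D| <= B & forall i, g i <= #|D :&: F i|.
Proof.
elim: B F g => [|B IH] F g lam gF pack.
  exists set0 => [|i]; first by rewrite cards0.
  by have := packing_demand_le pack i; rewrite leqn0 => /eqP->.
case: (pickP (fun i => 0 < g i)) => [i1 gi1 | g0]; last first.
  by exists set0 => [|i]; rewrite ?cards0 // set0I cards0 leqNgt g0.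
pose i0 := [arg min_(i < i1 | 0 < g i) #|F i|].
have [g_i0 min_i0] : 0 < g i0 /\ forall j, 0 < g j -> #|F i0| <= #|F j|.
  by rewrite /i0; case: arg_minnP => // i gi min_i; split=> // j /min_i.
have [a a_Fi0] : exists a, a \in F i0 by apply/card_gt0P; exact: leq_trans g_i0 (gF i0).
have [D cardD hitD] := IH _ _ (hitting_step_laminar lam (a := a))
  (hitting_step_le_card gF a) (hitting_step_packing lam gF pack g_i0 min_i0 a_Fi0).
exists (a |: D); first by rewrite cardsU1; case: (a \in D); lia.
exact: hitting_step_lift.
Qed.

Section Colourings.
Variables (T : finType) (e : rel T).
Hypothesis sym : symmetric e.
Hypothesis irr : irreflexive e.

Definition proper_colouring_on (U : {set T}) (s : nat) (col : T -> nat) :=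
  {in U, forall v, col v < s} /\ {in U &, forall u v, e u v -> col u != col v}.

Lemma colorable_of_colouring s (col : T -> nat) :
  proper_colouring_on [set: T] s col -> colorable e s.
Proof.
move=> [col_lt col_ok]; apply/existsP.
exists [ffun v => Ordinal (col_lt v (in_setT v))]; apply/forallP => u; apply/forallP => v.
by apply/implyP => euv; rewrite !ffunE -(inj_eq val_inj) /= col_ok ?inE.
Qed.

Lemma greedy_colouring (U : {set T}) (rank : T -> nat) s :
  {in U &, injective rank} ->
  (forall v, v \in U -> #|[set u in U | e u v & rank u < rank v]| < s) ->
  exists col, proper_colouring_on U s col.
Proof.
have [n] := ubnP #|U|; elim: n U => // n IH U ltUn rank_inj few_before.
have [->|[v0 v0U]] := set_0Vmem U; first by exists (fun=> 0); split=> v; rewrite inE.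
pose v := [arg max_(v > v0 in U) rank v].
have [vU v_last] : v \in U /\ forall u, u \in U -> u != v -> rank u < rank v.
  rewrite /v; case: arg_maxnP => // w wU w_max; split=> // u uU uw.
  have /= := w_max u uU; rewrite leq_eqVlt => /orP[/eqP/rank_inj eq_uw|//].
  by rewrite eq_uw ?eqxx in uw.
have [|||col [col_lt col_ok]] := IH (U :\ v).
- by rewrite (cardsD1 v U) vU in ltUn.
- by move=> x y /setD1P[_ xU] /setD1P[_ yU]; apply: rank_inj.
- move=> w /setD1P[_ wU]; apply: leq_ltn_trans (few_before w wU); apply: subset_leq_card.
  by apply/subsetP => u; rewrite !inE => /and3P[/andP[_ ->] -> ->].
pose nbr_cols := [seq col u | u <- enum [set u in U :\ v | e u v]].
have [i lt_i_s fresh_i] : exists2 i, i < s & i \notin nbr_cols.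
  apply: exists_fresh_below; rewrite size_map -cardE; apply: leq_ltn_trans (few_before v vU).
  apply: subset_leq_card; apply/subsetP => u; rewrite !inE => /andP[/andP[uv uU] euv].
  by rewrite uU euv v_last.
have nbr_col u : u \in U :\ v -> e u v -> col u \in nbr_cols.
  by move=> uUv euv; apply: map_f; rewrite mem_enum inE uUv.
exists (fun u => if u == v then i else col u); split=> [u uU | u w uU wU euw].
  by case: eqP => // /eqP uv; apply: col_lt; apply/setD1P.
rewrite /=; have [uv|uv] := eqVneq u v; have [wv|wv] := eqVneq w v; subst.
- by rewrite irr in euw.
- apply: contraNneq fresh_i => ->.
  by apply: nbr_col; rewrite 1?sym //; apply/setD1P.
- by apply: contraNneq fresh_i => <-; apply: nbr_col => //; apply/setD1P.
- by apply: col_ok => //; apply/setD1P.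
Qed.

(* [V1] and [V2] share the same [m] fresh colours, each being coloured injectively. *)
Lemma extend_colouring (U V1 V2 : {set T}) s m col :
  proper_colouring_on U s col ->
  (forall v, v \notin U -> (v \in V1) || (v \in V2)) ->
  (forall u v, u \in V1 -> v \in V2 -> ~~ e u v) ->
  #|V1| <= m -> #|V2| <= m ->
  exists col', proper_colouring_on [set: T] (s + m) col'.
Proof.
move=> [col_lt col_ok] outsideU noV12 V1m V2m.
pose col' v := if v \in U then col v else
  s + (if v \in V1 then index v (enum V1) else index v (enum V2)).
have V2_of v : v \notin U -> v \notin V1 -> v \in V2 by move/outsideU; case: (v \in V1).
exists col'; split=> [v _ | u v _ _ euv].
  rewrite /col'; case: ifP => [vU|/negbT vU]; first by rewrite ltn_addr ?col_lt.
  rewrite ltn_add2l; case: ifP => [vV1|/negbT vV1].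
    by rewrite (leq_trans _ V1m) // cardE index_mem mem_enum.
  by rewrite (leq_trans _ V2m) // cardE index_mem mem_enum V2_of.
have uv : u != v by apply: contraTneq euv => ->; rewrite irr.
rewrite /col'; case: (boolP (u \in U)) => uU; case: (boolP (v \in U)) => vU.
- exact: col_ok.
- by rewrite neq_ltn ltn_addr ?col_lt.
- by rewrite neq_ltn orbC ltn_addr ?col_lt.
- rewrite eqn_add2l; case: (boolP (u \in V1)) => uV1; case: (boolP (v \in V1)) => vV1.
  + by apply: contra uv => /eqP/index_inj-> //; rewrite mem_enum.
  + by have := noV12 u v uV1 (V2_of v vU vV1); rewrite euv.
  + by have := noV12 v u vV1 (V2_of u uU uV1); rewrite sym euv.
  + by apply: contra uv => /eqP/index_inj-> //; rewrite mem_enum V2_of.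
Qed.

End Colourings.

Section Cliques.
Variables (T : finType) (e : rel T).
Hypothesis sym : symmetric e.
Hypothesis irr : irreflexive e.

Lemma is_cliqueP (S : {set T}) :
  reflect {in S &, forall x y, x != y -> e x y} (is_clique e S).
Proof.
apply: (iffP forall_inP) => [cS x y xS yS|cS x xS].
  by have /forall_inP/(_ y yS)/implyP := cS x xS.
by apply/forall_inP => y yS; apply/implyP; apply: cS.
Qed.

Lemma clique_adj (S : {set T}) x y :
  is_clique e S -> x \in S -> y \in S -> x != y -> e x y.
Proof. by move/is_cliqueP; apply. Qed.

Lemma is_clique1 x : is_clique e [set x].
Proof. by apply/is_cliqueP => u v /set1P-> /set1P->; rewrite eqxx. Qed.

Lemma is_cliqueS (S S' : {set T}) : S' \subset S -> is_clique e S -> is_clique e S'.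
Proof.
by move=> /subsetP sub /is_cliqueP cS; apply/is_cliqueP => x y /sub xS /sub yS; apply: cS.
Qed.

Lemma is_cliqueU (S1 S2 : {set T}) : is_clique e S1 -> is_clique e S2 ->
  {in S1 & S2, forall x y, e x y} -> is_clique e (S1 :|: S2).
Proof.
move=> /is_cliqueP c1 /is_cliqueP c2 c12; apply/is_cliqueP.
move=> x y /setUP[xS1|xS2] /setUP[yS1|yS2] xy; [exact: c1|exact: c12|rewrite sym|exact: c2].
exact: c12.
Qed.

Lemma clique_card_le_omega (S : {set T}) : is_clique e S -> #|S| <= omega e.
Proof. by move=> cS; apply: (leq_bigmax_cond (F := fun S : {set T} => #|S|) S cS). Qed.

Lemma has_induced_of_seq (S : {set T}) k (h : rel 'I_k) (s : seq T) (x0 : T) :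
  size s = k -> uniq s -> {subset s <= S} ->
  (forall i j : 'I_k, i != j -> e (nth x0 s i) (nth x0 s j) = h i j) ->
  has_induced_on e S h.
Proof.
move=> size_s uniq_s sS hE; exists (nth x0 s); split=> // [i j /eqP|i].
  by rewrite nth_uniq ?size_s // => /eqP/val_inj.
by apply: sS; rewrite mem_nth ?size_s.
Qed.

Ltac edge_contra :=
  repeat match goal with
  | H : is_true (e ?a ?a) |- _ => by rewrite irr in H
  | H : is_true (e ?a ?b), H' : is_true (~~ e ?a ?b) |- _ => by rewrite H in H'
  | H : is_true (e ?a ?b), H' : is_true (~~ e ?b ?a) |- _ => by rewrite sym H in H'
  end.

Ltac distinct_vertices := rewrite /= !inE !negb_or /= ?andbT;
  repeat (apply/andP; split); try assumption; try (rewrite eq_sym; assumption);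
  apply/eqP => E; subst; edge_contra.

Ltac pattern_edge :=
  first [ assumption | (rewrite sym; assumption) | (apply/negbTE; assumption)
        | (rewrite sym; apply/negbTE; assumption) ].

Lemma no_induced_P4 S u x z w : induced_free_on e S P4 ->
  u \in S -> x \in S -> z \in S -> w \in S ->
  e u x -> e x z -> e z w -> ~~ e u z -> ~~ e x w -> ~~ e u w -> False.
Proof.
move=> free uS xS zS wS Eux Exz Ezw Nuz Nxw Nuw; apply: free.
apply: (@has_induced_of_seq _ _ _ [:: u; x; z; w] u) => //.
- by distinct_vertices.
- by move=> y; rewrite !inE => /or4P[] /eqP->.
- by move=> [[|[|[|[|i]]]] Hi] [[|[|[|[|j]]]] Hj] //= _; rewrite /P4 /path_rel /=; pattern_edge.
Qed.

Lemma no_induced_C4 S u x z w : induced_free_on e S C4 ->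
  u \in S -> x \in S -> z \in S -> w \in S -> u != z -> x != w ->
  e u x -> e x z -> e z w -> e w u -> ~~ e u z -> ~~ e x w -> False.
Proof.
move=> free uS xS zS wS Duz Dxw Eux Exz Ezw Ewu Nuz Nxw; apply: free.
apply: (@has_induced_of_seq _ _ _ [:: u; x; z; w] u) => //.
- by distinct_vertices.
- by move=> y; rewrite !inE => /or4P[] /eqP->.
- by move=> [[|[|[|[|i]]]] Hi] [[|[|[|[|j]]]] Hj] //= _;
    rewrite /C4 /cycle_rel /path_rel /=; pattern_edge.
Qed.

Lemma no_induced_C5 S a b c d f : chordal_on e S ->
  a \in S -> b \in S -> c \in S -> d \in S -> f \in S ->
  e a b -> e b c -> e c d -> e d f -> e f a ->
  ~~ e a c -> ~~ e a d -> ~~ e b d -> ~~ e b f -> ~~ e c f -> False.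
Proof.
move=> chordal aS bS cS dS fS Eab Ebc Ecd Edf Efa Nac Nad Nbd Nbf Ncf.
apply: (chordal 5 erefl).
apply: (@has_induced_of_seq _ _ _ [:: a; b; c; d; f] a) => //.
- by distinct_vertices.
- by move=> y; rewrite !inE => /orP[/eqP->|/or4P[] /eqP->].
- by move=> [[|[|[|[|[|i]]]]] Hi] [[|[|[|[|[|j]]]]] Hj] //= _;
    rewrite /cycle_rel /path_rel /=; pattern_edge.
Qed.

End Cliques.

Section CPairStructure.
Variables (T : finType) (e : rel T) (X A : {set T}).

Definition cnbhX x := x |: [set y in X | e x y].
Definition nbhA x := [set a in A | e x a].

(* Vertices outside [X] come first; [enum_rank] breaks ties. *)
Definition key x :=
  if x \in X then ((#|T| - #|cnbhX x|) * #|T|.+1 + (#|T| - #|nbhA x|)).+1 else 0.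

Definition rank x := key x * #|T| + enum_rank x.

Definition prevX x := [set z in X | e z x & rank z < rank x].

Let enum_rank_lt v : (enum_rank v : nat) < #|T| := ltn_ord (enum_rank v).

Lemma rank_inj : injective rank.
Proof.
move=> x y; rewrite /rank => eq_rank.
have := congr1 (modn^~ #|T|) eq_rank; rewrite !modnMDl !modn_small ?enum_rank_lt //.
by move/val_inj/enum_rank_inj.
Qed.

Lemma key_le_of_rank_lt u v : rank u < rank v -> key u <= key v.
Proof.
move=> lt_uv; rewrite leqNgt; apply/negP => lt_key.
have : (key v).+1 * #|T| <= key u * #|T| by rewrite leq_mul2r lt_key orbT.
by move: lt_uv; have := enum_rank_lt v; rewrite /rank mulSn; lia.
Qed.

Lemma key_le_cards z x : z \in X -> x \in X -> key z <= key x ->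
  #|cnbhX x| <= #|cnbhX z| /\ (#|cnbhX x| = #|cnbhX z| -> #|nbhA x| <= #|nbhA z|).
Proof.
rewrite /key => -> ->.
have := max_card (mem (cnbhX x)); have := max_card (mem (cnbhX z)).
have := max_card (mem (nbhA x)); have := max_card (mem (nbhA z)).
move: #|cnbhX x| #|cnbhX z| #|nbhA x| #|nbhA z| #|T| => a b c d n.
by split=> [|eq_ab]; nia.
Qed.

Hypothesis sym : symmetric e.
Hypothesis irr : irreflexive e.
Hypothesis disjXA : [disjoint X & A].
Hypothesis chordalXA : chordal_on e (X :|: A).
Hypothesis cliqueA : is_clique e A.
Hypothesis P4freeX : induced_free_on e X P4.
Hypothesis C4freeX : induced_free_on e X C4.
Hypothesis nbrA : forall x, x \in X -> exists2 a, a \in A & e x a.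
Hypothesis no_common_nbrA : forall x y, x \in X -> y \in X -> x != y -> ~~ e x y ->
  forall a, a \in A -> ~~ (e x a && e y a).

Let inXA_X x : x \in X -> x \in X :|: A.
Proof. by move=> xX; rewrite inE xX. Qed.

Let inXA_A a : a \in A -> a \in X :|: A.
Proof. by move=> aA; rewrite inE aA orbT. Qed.

Let neq_XA x a : x \in X -> a \in A -> x != a.
Proof. by move=> xX aA; apply: contraTneq xX => ->; rewrite (disjointFl disjXA aA). Qed.

Let C4freeXA := chordalXA (erefl : 3 < 4).

Lemma nbhA_disjoint x y : x \in X -> y \in X -> x != y -> ~~ e x y ->
  [disjoint nbhA x & nbhA y].
Proof.
move=> xX yX xy nxy; rewrite -setI_eq0; apply/eqP/setP => a; rewrite !inE.
apply/andP => -[/andP[aA exa] /andP[_ eya]].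
by have := no_common_nbrA xX yX xy nxy aA; rewrite exa eya.
Qed.

Lemma cnbhX_nested x z : x \in X -> z \in X -> e x z ->
  (cnbhX x \subset cnbhX z) || (cnbhX z \subset cnbhX x).
Proof.
move=> xX zX exz; case: (boolP (cnbhX x \subset cnbhX z)) => //= /subsetPn[u ux uz].
apply/subsetP => w wz; apply/negPn/negP => wx; move: ux uz wz wx; rewrite !inE.
case/orP => [/eqP->|/andP[uX exu]]; first by rewrite xX sym exz orbT.
rewrite uX /= negb_or => /andP[uz nzu].
case/orP => [/eqP wz|/andP[wX ezw]]; first by subst w; rewrite zX exz orbT.
rewrite wX /= negb_or => /andP[wx nxw].
case euw: (e u w).
- apply: (no_induced_C4 sym irr C4freeX uX xX zX wX uz _ _ exz ezw _ _ nxw) => //;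
  first [by rewrite eq_sym | by rewrite sym].
- apply: (no_induced_P4 sym irr P4freeX uX xX zX wX _ exz ezw _ nxw) => //;
  first [by rewrite euw | by rewrite sym].
Qed.

Lemma nbhA_nested x z : x \in X -> z \in X -> e x z ->
  (nbhA x \subset nbhA z) || (nbhA z \subset nbhA x).
Proof.
move=> xX zX exz; case: (boolP (nbhA x \subset nbhA z)) => //= /subsetPn[a ax az].
apply/subsetP => b bz; apply/negPn/negP => bx; move: ax az bz bx; rewrite !inE.
move=> /andP[aA exa]; rewrite aA /= => nza /andP[bA ezb]; rewrite bA /= => nxb.
have ab : a != b by apply: contraNneq nza => ->.
apply: (no_induced_C4 sym irr C4freeXA (inXA_X xX) (inXA_A aA) (inXA_A bA) (inXA_X zX)
  (neq_XA xX bA) _ exa (clique_adj cliqueA aA bA ab) _ _ nxb _) => //;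
  first [by rewrite eq_sym neq_XA | by rewrite sym].
Qed.

(* An [a] in [nbhA x] but not in [nbhA z] would close an induced C4 or C5 with a
   private [X]-neighbour [y] of [z] and an [A]-neighbour of [y]. *)
Lemma nbhA_subset_of_private_nbr x z : x \in X -> z \in X -> e x z ->
  ~~ (cnbhX z \subset cnbhX x) ->
  nbhA x \subset nbhA z.
Proof.
move=> xX zX exz /subsetPn[y yz yx]; move: yz yx; rewrite !inE.
case/orP => [/eqP->|/andP[yX ezy]]; first by rewrite zX exz orbT.
rewrite yX /= negb_or => /andP[yx nxy].
have [b bA eyb] := nbrA yX.
have xy : x != y by rewrite eq_sym.
have nxb : ~~ e x b by apply: contra (no_common_nbrA xX yX xy nxy bA) => ->.
apply/subsetP => a; rewrite !inE => /andP[aA exa]; rewrite aA /=.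
apply/negPn/negP => nza.
have nya : ~~ e y a by apply: contra (no_common_nbrA xX yX xy nxy aA) => ->; rewrite andbT.
have ab : a != b by apply: contraNneq nya => ->.
case ebz: (e b z).
- apply: (no_induced_C4 sym irr C4freeXA (inXA_A aA) (inXA_A bA) (inXA_X zX) (inXA_X xX)
    _ _ (clique_adj cliqueA aA bA ab) ebz _ _ _ _) => //;
  first [by rewrite eq_sym neq_XA | by rewrite sym].
- apply: (no_induced_C5 sym irr chordalXA (inXA_X xX) (inXA_A aA) (inXA_A bA) (inXA_X yX)
    (inXA_X zX) exa (clique_adj cliqueA aA bA ab) _ _ _ nxb nxy _ _) => //;
  first [by rewrite ebz | by rewrite sym].
Qed.

Lemma X_of_prevX x z : z \in prevX x -> x \in X.
Proof.
rewrite inE => /and3P[zX _ /key_le_of_rank_lt]; apply: contraTT => xX.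
by rewrite /key (negbTE xX) zX.
Qed.

Lemma prevX_dominates x z : z \in prevX x ->
  cnbhX x \subset cnbhX z /\ nbhA x \subset nbhA z.
Proof.
move=> zpx; have xX := X_of_prevX zpx; move: zpx; rewrite inE => /and3P[zX ezx /key_le_of_rank_lt].
case/(key_le_cards zX xX) => le_cnbh le_nbhA; have exz : e x z by rewrite sym.
have sub_cnbh : cnbhX x \subset cnbhX z.
  have /orP[//|sub] := cnbhX_nested xX zX exz.
  by have /eqP <- : cnbhX z == cnbhX x by rewrite eqEcard sub.
split=> //; have [sub|] := boolP (cnbhX z \subset cnbhX x); last exact: nbhA_subset_of_private_nbr.
have /orP[//|subA] := nbhA_nested xX zX exz.
have eq_cnbh : #|cnbhX x| = #|cnbhX z|.
  by apply/eqP; rewrite eqn_leq le_cnbh subset_leq_card.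
by have /eqP <- : nbhA z == nbhA x by rewrite eqEcard subA le_nbhA.
Qed.

Lemma prevX_adj x z1 z2 : z1 \in prevX x -> z2 \in prevX x -> z1 != z2 -> e z1 z2.
Proof.
move=> z1px z2px z12; have [/subsetP sub _] := prevX_dominates z1px.
move: z2px; rewrite inE => /and3P[z2X ez2x _].
have : z2 \in cnbhX z1 by apply: sub; rewrite !inE z2X sym ez2x orbT.
by rewrite !inE eq_sym (negbTE z12) => /andP[].
Qed.

End CPairStructure.

Section ExtendedCPair.
Variables (T : finType) (e : rel T) (Q X A : {set T}).
Hypothesis sym : symmetric e.
Hypothesis irr : irreflexive e.
Hypothesis disjXA : [disjoint X & A].
Hypothesis chordalXA : chordal_on e (X :|: A).
Hypothesis cliqueA : is_clique e A.
Hypothesis P4freeX : induced_free_on e X P4.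
Hypothesis C4freeX : induced_free_on e X C4.
Hypothesis nbrA : forall x, x \in X -> exists2 a, a \in A & e x a.
Hypothesis no_common_nbrA : forall x y, x \in X -> y \in X -> x != y -> ~~ e x y ->
  forall a, a \in A -> ~~ (e x a && e y a).
Hypothesis disjQX : [disjoint Q & X].
Hypothesis cliqueQ : is_clique e Q.
Hypothesis QX_adj : forall q x, q \in Q -> x \in X -> e q x.

Local Notation prev := (prevX e X A).
Local Notation NA := (nbhA e A).
Local Notation w := (omega e).

Let prev_dom :=
  prevX_dominates sym irr disjXA chordalXA cliqueA P4freeX C4freeX nbrA no_common_nbrA.
Let prev_adj :=
  prevX_adj sym irr disjXA chordalXA cliqueA P4freeX C4freeX nbrA no_common_nbrA.

Lemma prevX_subset_X x : prev x \subset X.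
Proof. by apply/subsetP => z; rewrite inE => /andP[]. Qed.

Lemma nbhA_subset_A x : NA x \subset A.
Proof. by apply/subsetP => a; rewrite inE => /andP[]. Qed.

Lemma clique_prevX x : is_clique e (prev x).
Proof. by apply/is_cliqueP => z1 z2; apply: prev_adj. Qed.

Lemma adj_prevX x z : z \in prev x -> e x z.
Proof. by rewrite inE sym => /and3P[]. Qed.

Lemma clique_prevX_nbhA x : is_clique e (x |: (prev x :|: NA x)).
Proof.
apply: (is_cliqueU sym (is_clique1 e x)) => [|_ y /set1P->].
  apply: (is_cliqueU sym (clique_prevX x) (is_cliqueS (nbhA_subset_A x) cliqueA)).
  move=> z a /prev_dom[_].
  by move=> /subsetP/(_ a) sub /sub; rewrite inE => /andP[].
by case/setUP=> [/adj_prevX|]; rewrite // inE => /andP[].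
Qed.

Lemma clique_Q_prevX x : x \in X -> is_clique e (Q :|: (x |: prev x)).
Proof.
move=> xX; apply: (is_cliqueU sym cliqueQ).
  by apply: (is_cliqueU sym (is_clique1 e x) (clique_prevX x)) => _ z /set1P->; apply: adj_prevX.
by move=> q y qQ /setU1P[->|/(subsetP (prevX_subset_X x))]; apply: QX_adj.
Qed.

Lemma prevX_nbhA_le_omega x : x \in X -> #|prev x|.+1 + #|NA x| <= w.
Proof.
move=> xX; have := clique_card_le_omega (clique_prevX_nbhA x).
have x_prev : x \notin prev x by rewrite inE irr andbF.
have x_NA : x \notin NA x by rewrite inE (disjointFr disjXA xX).
by rewrite cardsU1 cardsU_disjoint ?(disjointW (prevX_subset_X x) (nbhA_subset_A x)) //
  in_setU (negbTE x_prev) (negbTE x_NA).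
Qed.

Definition height := \max_(x in X) #|prev x|.+1.

Lemma prevX_lt_height x : x \in X -> #|prev x| < height.
Proof. by move=> xX; apply: (leq_bigmax_cond (F := fun x => #|prev x|.+1)). Qed.

Lemma Q_height_le_omega : #|Q| + height <= w.
Proof.
suff : height <= w - #|Q| by have := clique_card_le_omega cliqueQ; lia.
apply/bigmax_leqP => x xX; have := clique_card_le_omega (clique_Q_prevX xX).
have x_prev : x \notin prev x by rewrite inE irr andbF.
have dQ : [disjoint Q & x |: prev x].
  by apply: disjointWr disjQX; rewrite subUset sub1set xX prevX_subset_X.
rewrite cardsU_disjoint // cardsU1 x_prev; lia.
Qed.

Let c := (w + 3) %/ 4.

(* How many [A]-neighbours of [x] the set [D] must contain for [x] to see at most
   [height + c] vertices among [prev x], [x] and its [A]-neighbours outside [D]. *)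
Let demand x := if x \in X then #|NA x| + #|prev x|.+1 - (height + c) else 0.

Let X_of_demand x : 0 < demand x -> x \in X.
Proof. by rewrite /demand; case: (x \in X). Qed.

Lemma nbhA_packing (P : {set T}) : {in P, forall x, 0 < demand x} ->
  pairwise_disjoint NA P -> \sum_(x in P) demand x <= w - height.
Proof.
move=> pos dP; have PX x : x \in P -> x \in X by move/pos/X_of_demand.
apply: (packing_bound_arith (c := c) (m := #|P|)).
- by rewrite /c; lia.
- rewrite -sum_nat_const -big_split /=.
  apply: leq_trans (clique_card_le_omega cliqueA).
  apply: leq_trans (_ : \sum_(x in P) #|NA x| <= _).
    apply: leq_sum => x xP; have := pos x xP; have := prevX_lt_height (PX x xP).
    by rewrite /demand PX //; lia.
  rewrite -card_bigcup_disjoint //; apply: subset_leq_card.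
  by apply/bigcupsP => x _; apply: nbhA_subset_A.
- rewrite -sum_nat_const; apply: leq_sum => x xP; have := prevX_nbhA_le_omega (PX x xP).
  by rewrite /demand PX //; lia.
Qed.

Lemma nbhA_laminar x y : 0 < demand x -> 0 < demand y ->
  [|| NA x \subset NA y, NA y \subset NA x | [disjoint NA x & NA y]].
Proof.
move=> /X_of_demand xX /X_of_demand yX; have [->|xy] := eqVneq x y; first by rewrite subxx.
case exy: (e x y); last by rewrite (nbhA_disjoint no_common_nbrA xX yX xy) ?exy ?orbT.
by case/orP: (nbhA_nested sym irr disjXA chordalXA cliqueA xX yX exy) => ->; rewrite ?orbT.
Qed.

Lemma demand_le_card x : demand x <= #|NA x|.
Proof. by rewrite /demand; case: ifP => // xX; have := prevX_lt_height xX; lia. Qed.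

Lemma exists_nbhA_hitting_set : exists D : {set T},
  [/\ D \subset A, #|D| <= w - height, #|A :\: D| <= height &
      {in X, forall x, #|NA x :\: D| + #|prev x|.+1 <= height + c}].
Proof.
have [D0 cardD0 hitD0] := laminar_hitting_set nbhA_laminar demand_le_card nbhA_packing.
have [D [sD0D sDA cardD]] : exists D : {set T},
    [/\ D0 :&: A \subset D, D \subset A & #|D| = minn #|A| (w - height)].
  apply: subset_card_between; first exact: subsetIr.
  rewrite geq_minl leq_min subset_leq_card ?subsetIr //.
  by rewrite (leq_trans _ cardD0) ?subset_leq_card ?subsetIl.
exists D; split=> //; first by rewrite cardD geq_minr.
  by have := clique_card_le_omega cliqueA; rewrite cardsD (setIidPr sDA) cardD; lia.
move=> x xX; have := hitD0 x; rewrite /demand xX.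
have : #|D0 :&: NA x| <= #|D :&: NA x|.
  apply/subset_leq_card/subsetP => a; rewrite !inE => /andP[aD0 /andP[aA exa]].
  by rewrite exa aA (subsetP sD0D) // inE aD0 aA.
by have := cardsID D (NA x); rewrite setIC; lia.
Qed.

Lemma colouring_X_A_outside (D : {set T}) :
  #|A :\: D| <= height ->
  {in X, forall x, #|NA x :\: D| + #|prev x|.+1 <= height + c} ->
  exists col, proper_colouring_on e (X :|: (A :\: D)) (height + c) col.
Proof.
move=> cardAD hitD; apply: (greedy_colouring sym irr (rank := rank e X A)).
  by move=> u v _ _; apply: rank_inj.
move=> v; case/setUP=> [vX|vAD].
  apply: leq_ltn_trans (_ : #|(NA v :\: D) :|: prev v| < _); last first.
    by apply: leq_ltn_trans (leq_card_setU _ _) _; have := hitD v vX; lia.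
  apply/subset_leq_card/subsetP => u; rewrite !inE => /and3P[/orP[uX|/andP[uD uA]] euv lt_uv].
    by rewrite uX euv lt_uv orbT.
  by rewrite uD uA sym euv.
have vX : v \notin X by move: vAD; rewrite inE => /andP[_ vA]; rewrite (disjointFl disjXA vA).
apply: leq_ltn_trans (_ : #|(A :\: D) :\ v| < _); last first.
  by move: cardAD; rewrite (cardsD1 v (A :\: D)) vAD; lia.
apply/subset_leq_card/subsetP => u; rewrite !inE => /and3P[uU euv /key_le_of_rank_lt].
rewrite /key (negbTE vX) leqn0; case: ifP => // uX _.
by move: uU; rewrite uX /= => ->; rewrite andbT; apply: contraTneq euv => ->; rewrite irr.
Qed.

Hypothesis QXA_cover : Q :|: X :|: A = [set: T].
Hypothesis QA_nonadj : forall q a, q \in Q -> a \in A -> ~~ e q a.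

Lemma colorable_extended_C_pair : colorable e ((5 * w + 3) %/ 4).
Proof.
have [D [sDA cardD cardAD hitD]] := exists_nbhA_hitting_set.
have [col col_ok] := colouring_X_A_outside cardAD hitD.
have [||||col' col'_ok] := extend_colouring sym irr col_ok (V1 := D) (V2 := Q) (m := w - height).
- move=> v; have : v \in Q :|: X :|: A by rewrite QXA_cover inE.
  rewrite !inE negb_or => /orP[/orP[->|->]|->]; rewrite ?orbT // => /andP[_].
  by case: (v \in D).
- by move=> u v uD vQ; rewrite sym QA_nonadj // (subsetP sDA).
- exact: cardD.
- by have := Q_height_le_omega; lia.
suff -> : (5 * w + 3) %/ 4 = height + c + (w - height) by exact: colorable_of_colouring col'_ok.
by have := Q_height_le_omega; rewrite /c; lia.
Qed.

End ExtendedCPair.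

Theorem lemma5p14 (T : finType) (e : rel T) (sym : symmetric e) (irr : irreflexive e) :
  extended_C_pair e -> chi irr <= (5 * omega e + 3) %/ 4.
Proof.
move=> [Q [X [A [/and3P[disjQX _ disjXA] cover [_ [_ chordal] cliqueA [P4freeX C4freeX _]
  [nbrA no_common_nbrA]] cliqueQ [QX_adj QA_nonadj]]]]].
rewrite /chi; case: ex_minnP => k _ min_k; apply: min_k.
exact: (colorable_extended_C_pair sym irr disjXA chordal cliqueA P4freeX C4freeX nbrA
  no_common_nbrA disjQX cliqueQ QX_adj cover QA_nonadj).
Qed.
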